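(* Let $\mathbb{K}=\mathbb{R}$ or $\mathbb{C}$, let $(V,W_\ast)$ be a finite-dimensional $\mathbb{K}$-vector space with an increasing filtration, and let $\phi:A_1^\ast\to A_2^\ast$ be a morphism of cohomologically connected DGAs over $\mathbb{K}$ inducing isomorphisms on $0$-th and first cohomology. Then the induced functors $F(\phi):F^{nil}(A_1^\ast,V,W_\ast)\to F^{nil}(A_2^\ast,V,W_\ast)$ and $F_{gr}(\phi):F^{nil}_{gr}(A_1^\ast,V,W_\ast)\to F^{nil}_{gr}(A_2^\ast,V,W_\ast)$ are fully faithful.
   Context: A DGA $A^\ast$ is cohomologically connected if $H^0(A^\ast)\cong\mathbb{K}$. $W_k(\mathrm{End}(V))$ denotes the endomorphisms $f$ with $f(W_i V)\subset W_{i+k}V$ for all $i$. The category $F^{nil}(A^\ast,V,W_\ast)$ has objects $\omega\in A^1\otimes W_{-1}(\mathrm{End}(V))$ with $d\omega+\frac12[\omega,\omega]=0$, and morphisms from $\omega_1$ to $\omega_2$ the elements $a\in A^0\otimes W_0(\mathrm{End}(V))$ with $da+\omega_1a-a\omega_2=0$. The category $F^{nil}_{gr}(A^\ast,V,W_\ast)$ has the same objects, and morphisms from $\omega_1$ to $\omega_2$ the elements $a\in\mathrm{Id}_V+A^0\otimes W_{-1}(\mathrm{End}(V))$ with $da+\omega_1a-a\omega_2=0$. The functors $F(\phi),F_{gr}(\phi)$ apply $\phi\otimes\mathrm{id}$ to objects and morphisms. *)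

From HB Require Import structures.
From mathcomp Require Import all_boot all_order all_algebra.
From mathcomp Require Import complex.
From mathcomp Require Import Rstruct.

Import Order.TTheory GRing.Theory Num.Theory.
Local Open Scope ring_scope.

Definition Kfield (b : bool) : fieldType :=
  if b then (Rdefinitions.R : fieldType) else (complex Rdefinitions.R : fieldType).

(* A (commutative, non-negatively graded) differential graded algebra over K.
   The underlying algebra is A = (+)_{k >= 0} A^k, where A^k = dga_deg k. *)
Record DGA (K : fieldType) := {
  dga_car : algType K;
  dga_deg : nat -> {pred dga_car};
  dga_d : dga_car -> dga_car;
  dga_deg0 : forall k, 0 \in dga_deg k;
  dga_degD : forall k x y, x \in dga_deg k -> y \in dga_deg k -> x + y \in dga_deg k;
  dga_degZ : forall k (c : K) x, x \in dga_deg k -> c *: x \in dga_deg k;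
  dga_span : forall x : dga_car, exists m (f : nat -> dga_car),
      (forall i, f i \in dga_deg i) /\ x = \sum_(i < m) f i;
  dga_direct : forall m (f : nat -> dga_car), (forall i, f i \in dga_deg i) ->
      \sum_(i < m) f i = 0 -> forall i, (i < m)%N -> f i = 0;
  dga_deg1 : 1 \in dga_deg 0;
  dga_degM : forall p q x y, x \in dga_deg p -> y \in dga_deg q ->
      x * y \in dga_deg (p + q);
  dga_gcomm : forall p q x y, x \in dga_deg p -> y \in dga_deg q ->
      x * y = (-1) ^+ (p * q) * (y * x);
  dga_dD : forall x y, dga_d (x + y) = dga_d x + dga_d y;
  dga_dZ : forall (c : K) x, dga_d (c *: x) = c *: dga_d x;
  dga_d_deg : forall k x, x \in dga_deg k -> dga_d x \in dga_deg k.+1;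
  dga_dd : forall x, dga_d (dga_d x) = 0;
  dga_leibniz : forall p x y, x \in dga_deg p ->
      dga_d (x * y) = dga_d x * y + (-1) ^+ p * (x * dga_d y)
}.

Arguments dga_car {K} d : rename.
Arguments dga_deg {K} d k.
Arguments dga_d {K} d x.


Definition cocycle {K : fieldType} (A : DGA K) (k : nat) (x : dga_car A) : Prop :=
  x \in dga_deg A k /\ dga_d A x = 0.

Definition coboundary {K : fieldType} (A : DGA K) (k : nat) (x : dga_car A) : Prop :=
  match k with
  | 0 => x = 0
  | j.+1 => exists y, y \in dga_deg A j /\ x = dga_d A y
  end.

Definition cohom_connected {K : fieldType} (A : DGA K) : Prop :=
  forall x, cocycle A 0 x -> exists c : K, x = c%:A.

Definition dga_morphism {K : fieldType} {A1 A2 : DGA K} (phi : dga_car A1 -> dga_car A2) : Prop :=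
  [/\ (forall x y, phi (x + y) = phi x + phi y) /\
      (forall (c : K) x, phi (c *: x) = c *: phi x),
      forall x y, phi (x * y) = phi x * phi y,
      phi 1 = 1,
      forall k x, x \in dga_deg A1 k -> phi x \in dga_deg A2 k &
      forall x, phi (dga_d A1 x) = dga_d A2 (phi x)].

Definition cohom_iso {K : fieldType} {A1 A2 : DGA K} (phi : dga_car A1 -> dga_car A2) (k : nat) : Prop :=
  (forall x, cocycle A1 k x -> coboundary A2 k (phi x) -> coboundary A1 k x) /\
  (forall y, cocycle A2 k y -> exists x, cocycle A1 k x /\ coboundary A2 k (phi x - y)).

(* V = K^n (column vectors), with an increasing filtration W_i, i in Z.
   W_i is the subspace { v | v^T lies in the row space of W i }. *)
Definition memW {K : fieldType} {n : nat} (W : int -> 'M[K]_n) (i : int) (v : 'cV[K]_n) : bool :=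
  (v^T <= W i)%MS.

Definition filtration {K : fieldType} {n : nat} (W : int -> 'M[K]_n) : Prop :=
  [/\ forall i : int, (W i <= W (i + 1)%R)%MS,
      exists i0 : int, forall i, i <= i0 -> W i == 0 &
      exists i1 : int, forall i, i1 <= i -> row_full (W i)].

(* W_k(End V): endomorphisms f (acting by v |-> f *m v) with f(W_i) in W_{i+k} *)
Definition WEnd {K : fieldType} {n : nat} (W : int -> 'M[K]_n) (k : int) (f : 'M[K]_n) : Prop :=
  forall i v, memW W i v -> memW W (i + k) (f *m v).

(* A (x) End(V) is identified with n x n matrices with entries in A;
   End(V) embeds via f |-> 1 (x) f. *)
Definition embK {K : fieldType} (A : DGA K) {n : nat} (f : 'M[K]_n) : 'M[dga_car A]_n :=
  map_mx (fun c : K => c%:A) f.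

(* M lies in the image of A^k (x) U -> A (x) End(V) *)
Definition tensor {K : fieldType} (A : DGA K) {n : nat} (k : nat) (U : 'M[K]_n -> Prop)
    (M : 'M[dga_car A]_n) : Prop :=
  exists m (a : 'I_m -> dga_car A) (u : 'I_m -> 'M[K]_n),
    [/\ forall j, a j \in dga_deg A k, forall j, U (u j) &
        M = \sum_(j < m) a j *: embK A (u j)].

Definition gbracket {K : fieldType} {A : DGA K} {n : nat} (p q : nat) (x y : 'M[dga_car A]_n) :
    'M[dga_car A]_n :=
  x *m y - ((-1) ^+ (p * q) : dga_car A) *: (y *m x).

Definition dmx {K : fieldType} {A : DGA K} {n : nat} (M : 'M[dga_car A]_n) : 'M[dga_car A]_n :=
  map_mx (dga_d A) M.

(* Objects of F^nil(A, V, W) (= objects of F^nil_gr(A, V, W)) *)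
Definition Fnil_obj {K : fieldType} {A : DGA K} {n : nat} (W : int -> 'M[K]_n) (w : 'M[dga_car A]_n) : Prop :=
  tensor A 1 (WEnd W (-1)) w /\
  dmx w + (((2%:R)^-1 : K)%:A : dga_car A) *: gbracket 1 1 w w = 0.

Definition flat_eq {K : fieldType} {A : DGA K} {n : nat} (w1 w2 a : 'M[dga_car A]_n) : Prop :=
  dmx a + w1 *m a - a *m w2 = 0.

Definition Fnil_hom {K : fieldType} {A : DGA K} {n : nat} (W : int -> 'M[K]_n) (w1 w2 a : 'M[dga_car A]_n) : Prop :=
  tensor A 0 (WEnd W 0) a /\ flat_eq w1 w2 a.

Definition Fnilgr_hom {K : fieldType} {A : DGA K} {n : nat} (W : int -> 'M[K]_n) (w1 w2 a : 'M[dga_car A]_n) : Prop :=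
  (exists b, tensor A 0 (WEnd W (-1)) b /\ a = 1%:M + b) /\ flat_eq w1 w2 a.

Definition fully_faithful {O1 O2 M1 M2 : Type}
    (obj1 : O1 -> Prop) (hom1 : O1 -> O1 -> M1 -> Prop)
    (hom2 : O2 -> O2 -> M2 -> Prop) (Fo : O1 -> O2) (Fm : M1 -> M2) : Prop :=
  forall x y, obj1 x -> obj1 y ->
    (forall a b, hom1 x y a -> hom1 x y b -> Fm a = Fm b -> a = b) /\
    (forall c, hom2 (Fo x) (Fo y) c -> exists a, hom1 x y a /\ Fm a = c).

From HB Require Import structures.
From mathcomp Require Import all_boot all_order all_algebra.
From mathcomp Require Import complex Rstruct zify.
Import Order.TTheory GRing.Theory Num.Theory.
Local Open Scope ring_scope.
Set Implicit Arguments. Unset Strict Implicit. Unset Printing Implicit Defensive.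

(* Work in a basis of V adapted to the filtration, the p-th basis vector having weight [w p].
   There W_k(End V) consists of the matrices whose (r, s) entry vanishes when w r > w s + k,
   and, objects x, y lying in W_{-1}, the twisted differential da + x a - a y of an [a] in
   W_k agrees with da on the entries where w r = w s + k.  Hence, by induction on the depth -k:
   - if a morphism [c] satisfies phi c = 0, its entries of depth -k are 0-cocycles killed by
     phi, so they vanish because H^0(phi) is injective;
   - a morphism [c] between the images lifts depth by depth: the defect da + x a - a y of a
     partial lift [a] is, at the current depth, a 1-cocycle (by flatness of x and y) whose
     image is the coboundary of the entry of phi a - c, so injectivity of H^1(phi) and
     surjectivity of H^0(phi) provide a correction of degree 0;
   - for F_gr, the first argument applied to a - 1 on the entries with w r = w s shows that
     a - 1 lies in W_{-1} when phi a - 1 does. *)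

Section AdaptedBasis.
Variables (K : fieldType) (n : nat).

Definition rows_upto r (w : 'I_r -> int) (i : int) (S : 'M[K]_(r, n)) : 'M[K]_(r, n) :=
  \matrix_(q, c) (if w q <= i then S q c else 0).

Lemma rows_upto_id r (w : 'I_r -> int) i S : (forall q, w q <= i) -> rows_upto w i S = S.
Proof. by move=> wi; apply/matrixP=> q c; rewrite mxE wi. Qed.

Lemma rows_upto_diag r (w : 'I_r -> int) i S :
  rows_upto w i S = diag_mx (\row_q (if w q <= i then 1 else 0)) *m S.
Proof.
by apply/matrixP=> q c; rewrite mul_diag_mx !mxE; case: ifP; rewrite ?mul1r ?mul0r.
Qed.

Lemma sub_rows_upto (w : 'I_n -> int) i (S : 'M[K]_n) (v : 'rV[K]_n) :
  S \in unitmx -> (v <= rows_upto w i S)%MS <-> (forall p, i < w p -> (v *m invmx S) 0 p = 0).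
Proof.
move=> uS; rewrite rows_upto_diag; set P := diag_mx _; split.
  case/submxP=> D ->; rewrite mulmxA mulmxK // => p ltip.
  by rewrite mul_mx_diag !mxE leNgt ltip mulr0.
move=> vS; set x := v *m invmx S in vS.
have -> : v = x *m S by rewrite mulmxKV.
have -> : x = x *m P.
  clearbody x; apply/matrixP=> a p; rewrite mul_mx_diag !mxE.
  case: leP => [_|ltip]; first by rewrite mulr1.
  by rewrite mulr0 (ord1 a) vS.
by rewrite -mulmxA submxMl.
Qed.

Variables (W : int -> 'M[K]_n).
Hypothesis W_incr : forall i, (W i <= W (i + 1))%MS.

Lemma adapted_rows_step (j : int) r (S : 'M[K]_(r, n)) (w : 'I_r -> int) :
    row_free S -> (forall q, w q <= j) -> (forall i, i <= j -> (W i :=: rows_upto w i S)%MS) ->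
  exists r' (S' : 'M[K]_(r', n)) (w' : 'I_r' -> int), [/\ row_free S',
    forall q, w' q <= j + 1 & forall i, i <= j + 1 -> (W i :=: rows_upto w' i S')%MS].
Proof.
move=> freeS wS WS; set D := (W (j + 1) :\: W j)%MS.
pose w' (q : 'I_(r + \rank D)) := if split q is inl q1 then w q1 else j + 1.
have upto_w' i : rows_upto w' i (col_mx S (row_base D)) =
    col_mx (rows_upto w i S) (if j + 1 <= i then row_base D else 0).
  apply/matrixP=> q c; rewrite !mxE /w'.
  by case: (split q) => q1; rewrite ?mxE //; case: ifP; rewrite ?mxE.
have SW : (S :=: W j)%MS.
  by apply: eqmx_sym; rewrite -[X in (_ :=: X)%MS](rows_upto_id S wS); exact: WS.
exists (r + \rank D)%N, (col_mx S (row_base D)), w'; split.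
- rewrite /row_free -addsmxE mxrank_disjoint_sum ?(eq_row_base D) ?(eqP freeS) //.
  apply/eqP; rewrite -submx0 (cap_eqmx SW (eq_row_base D)) capmxC capmx_diff.
  exact: submx_refl.
- by move=> q; rewrite /w'; case: (split q) => // q1; apply: (le_trans (wS q1)); rewrite lerDl.
move=> i; rewrite le_eqVlt => /orP[/eqP->|ltij]; rewrite upto_w'.
  rewrite lexx rows_upto_id => [|q]; last by apply: (le_trans (wS q)); rewrite lerDl.
  apply: eqmx_trans (eqmx_sym (addsmx_diff_cap_eq _ (W j))) _.
  rewrite addsmxC; apply: eqmx_trans (addsmxE _ _); apply: adds_eqmx.
    exact: eqmx_trans (capmx_idPr (W_incr j)) (eqmx_sym SW).
  exact: eqmx_sym (eq_row_base D).
rewrite ifF; last by apply/negbTE; rewrite -ltNge.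
apply: eqmx_trans (WS i _) _; first by rewrite -ltzD1.
exact: eqmx_trans (eqmx_sym (addsmx0 _ _)) (addsmxE _ _).
Qed.

Lemma adapted_rows (i0 : int) : (forall i, i <= i0 -> W i == 0) ->
  forall t : nat, exists r (S : 'M[K]_(r, n)) (w : 'I_r -> int), [/\ row_free S,
    forall q, w q <= i0 + t%:Z & forall i, i <= i0 + t%:Z -> (W i :=: rows_upto w i S)%MS].
Proof.
move=> W0; elim=> [|t [r [S [w [freeS wS WS]]]]].
  exists 0%N, 0, (fun _ => i0); split=> [|[]//|i].
    by rewrite /row_free mxrank0.
  rewrite addr0 => /W0/eqP->; rewrite (flatmx0 (rows_upto _ _ _)).
  by apply/eqmxP; rewrite !sub0mx.
have -> : i0 + t.+1%:Z = i0 + t%:Z + 1 by lia.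
exact: adapted_rows_step freeS wS WS.
Qed.

End AdaptedBasis.

Lemma filtration_adapted_basis (K : fieldType) n (W : int -> 'M[K]_n) : filtration W ->
  exists (B : 'M[K]_n) (w : 'I_n -> int), B \in unitmx /\
    forall i v, memW W i v <-> (forall p, i < w p -> (invmx B *m v) p 0 = 0).
Proof.
case=> W_incr [i0 W0] [i1 Wfull].
have [r [S [w [freeS wS WS]]]] := adapted_rows W_incr W0 `|i1 - i0|.
set T := i0 + _ in wS WS; have i1T : i1 <= T by rewrite /T; lia.
have ST : (S :=: W T)%MS.
  by apply: eqmx_sym; rewrite -[X in (_ :=: X)%MS](rows_upto_id S wS); exact: WS.
have WS' i : (W i :=: rows_upto w i S)%MS.
  have [/WS//|ltTi] := leP i T.
  rewrite rows_upto_id => [|q]; last exact: le_trans (wS q) (ltW ltTi).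
  apply: eqmx_trans (eqmx_sym ST); apply/eqmxP.
  by rewrite !submx_full ?Wfull // (le_trans i1T) ?ltW.
have rn : r = n by rewrite -(eqP freeS) ST; apply/eqP; exact: Wfull.
subst r; have uS : S \in unitmx by rewrite -row_free_unit.
exists S^T, w; split=> [|i v]; first by rewrite unitmx_tr.
rewrite /memW (WS' i) sub_rows_upto //.
have coordE p : (invmx S^T *m v) p 0 = (v^T *m invmx S) 0 p.
  by rewrite -[v^T *m _]trmxK trmx_mul trmxK trmx_inv [RHS]mxE.
by split=> vS p /vS; rewrite coordE.
Qed.

Lemma dga_d_is_linear (K : fieldType) (A : DGA K) : linear (dga_d A).
Proof. by move=> c x y; rewrite dga_dD dga_dZ. Qed.

HB.instance Definition _ (K : fieldType) (A : DGA K) :=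
  GRing.isLinear.Build _ _ _ _ (dga_d A) (@dga_d_is_linear K A).

Lemma dga_deg_submod_closed (K : fieldType) (A : DGA K) k : subsemimod_closed (dga_deg A k).
Proof.
split; first by split=> [|x y]; [exact: dga_deg0 | exact: dga_degD].
by move=> c x; exact: dga_degZ.
Qed.

HB.instance Definition _ (K : fieldType) (A : DGA K) k :=
  GRing.isSubmodClosed.Build _ _ (dga_deg A k) (@dga_deg_submod_closed K A k).

Section DGATheory.
Variables (K : fieldType) (A : DGA K).
Local Notation d := (dga_d A).
Local Notation deg := (dga_deg A).

Lemma dga_d1 : d 1 = 0.
Proof.
have := @dga_leibniz _ A 0 1 1 (@dga_deg1 _ A).
by rewrite mul1r expr0 !mul1r mulr1 -[X in X = _]addr0 => /addrI <-.
Qed.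

Lemma dga_d_nat m : d m%:R = 0.
Proof. by rewrite raddfMn /= dga_d1 mul0rn. Qed.

Lemma dga_deg_nat m : (m%:R : dga_car A) \in deg 0.
Proof. by rewrite rpredMn // dga_deg1. Qed.

End DGATheory.

Section DGAMatrix.
Variables (K : fieldType) (A : DGA K) (n : nat).
Local Notation M := 'M[dga_car A]_n.
Implicit Types X Y : M.

Definition homog_mx (p : nat) (X : M) := forall r s, X r s \in dga_deg A p.

Lemma homog_mxD p X Y : homog_mx p X -> homog_mx p Y -> homog_mx p (X + Y).
Proof. by move=> hX hY r s; rewrite mxE rpredD. Qed.

Lemma homog_mxB p X Y : homog_mx p X -> homog_mx p Y -> homog_mx p (X - Y).
Proof. by move=> hX hY r s; rewrite !mxE rpredB. Qed.

Lemma homog_mx_mul p q X Y : homog_mx p X -> homog_mx q Y -> homog_mx (p + q) (X *m Y).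
Proof. by move=> hX hY r s; rewrite mxE rpred_sum // => k _; apply: dga_degM. Qed.

Lemma homog_mx1 : homog_mx 0 1%:M.
Proof. by move=> r s; rewrite mxE dga_deg_nat. Qed.

Lemma homog_mx_dmx p X : homog_mx p X -> homog_mx p.+1 (dmx X).
Proof. by move=> hX r s; rewrite mxE dga_d_deg. Qed.

Lemma dmx_is_zmod_morphism : zmod_morphism (@dmx K A n).
Proof. by move=> X Y; rewrite /dmx map_mxB. Qed.

HB.instance Definition _ := GRing.isZmodMorphism.Build _ _ (@dmx K A n) dmx_is_zmod_morphism.

Lemma dmx_dmx X : dmx (dmx X) = 0.
Proof. by apply/matrixP=> r s; rewrite !mxE dga_dd. Qed.

Lemma dmx1 : dmx (1%:M : M) = 0.
Proof. by apply/matrixP=> r s; rewrite !mxE dga_d_nat. Qed.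

Lemma dmx_mul_deg0 X Y : homog_mx 0 X -> dmx (X *m Y) = dmx X *m Y + X *m dmx Y.
Proof.
move=> hX; apply/matrixP=> r s; rewrite !mxE raddf_sum /= -big_split; apply: eq_bigr => k _.
by rewrite !mxE (dga_leibniz _ _ _ _ _ (hX r k)) expr0 mul1r.
Qed.

Lemma dmx_mul_deg1 X Y : homog_mx 1 X -> dmx (X *m Y) = dmx X *m Y - X *m dmx Y.
Proof.
move=> hX; apply/matrixP=> r s; rewrite !mxE raddf_sum /= -sumrB; apply: eq_bigr => k _.
by rewrite !mxE (dga_leibniz _ _ _ _ _ (hX r k)) expr1 mulN1r.
Qed.

Lemma embK_in_alg (u : 'M[K]_n) : embK A u = map_mx (in_alg (dga_car A)) u.
Proof. by []. Qed.

Lemma dmx_embKl (u : 'M[K]_n) X : dmx (embK A u *m X) = embK A u *m dmx X.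
Proof.
apply/matrixP=> r s; rewrite !mxE raddf_sum /=; apply: eq_bigr => k _.
by rewrite !mxE !mulr_algl dga_dZ.
Qed.

Lemma dmx_embKr (u : 'M[K]_n) X : dmx (X *m embK A u) = dmx X *m embK A u.
Proof.
apply/matrixP=> r s; rewrite !mxE raddf_sum /=; apply: eq_bigr => k _.
by rewrite !mxE !mulr_algr dga_dZ.
Qed.

End DGAMatrix.

Section Weights.
Variables (n : nat) (w : 'I_n -> int).

(* W_k(End V) in a basis adapted to the filtration, [w p] being the weight of the p-th vector. *)
Definition in_WEnd (R : pzRingType) (k : int) (X : 'M[R]_n) :=
  forall r s, w s + k < w r -> X r s = 0.

Variable R : pzRingType.
Implicit Types X Y : 'M[R]_n.

Lemma in_WEnd0 k : in_WEnd k (0 : 'M[R]_n).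
Proof. by move=> r s _; rewrite mxE. Qed.

Lemma in_WEnd1 : in_WEnd 0 (1%:M : 'M[R]_n).
Proof. by move=> r s; rewrite addr0 mxE => lt; case: eqP => // e; rewrite e ltxx in lt. Qed.

Lemma in_WEndD k X Y : in_WEnd k X -> in_WEnd k Y -> in_WEnd k (X + Y).
Proof. by move=> hX hY r s lt; rewrite mxE hX ?hY ?addr0. Qed.

Lemma in_WEndN k X : in_WEnd k X -> in_WEnd k (- X).
Proof. by move=> hX r s lt; rewrite mxE hX ?oppr0. Qed.

Lemma in_WEndB k X Y : in_WEnd k X -> in_WEnd k Y -> in_WEnd k (X - Y).
Proof. by move=> hX hY; apply: in_WEndD (in_WEndN hY). Qed.

Lemma in_WEndW k1 k2 X : k1 <= k2 -> in_WEnd k1 X -> in_WEnd k2 X.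
Proof. by move=> le12 hX r s lt; apply: hX; apply: le_lt_trans lt; rewrite lerD2l. Qed.

Lemma in_WEnd_mul k1 k2 X Y : in_WEnd k1 X -> in_WEnd k2 Y -> in_WEnd (k1 + k2) (X *m Y).
Proof.
move=> hX hY r s lt; rewrite mxE big1 // => q _.
have [ltq|leq] := ltP (w q + k1) (w r); first by rewrite hX ?mul0r.
by rewrite hY ?mulr0 //; lia.
Qed.

Lemma in_WEnd_map (S : pzRingType) (f : R -> S) k X :
  f 0 = 0 -> in_WEnd k X -> in_WEnd k (map_mx f X).
Proof. by move=> f0 hX r s lt; rewrite mxE hX. Qed.

Lemma in_WEnd_subE k X Y r s : in_WEnd k (X - Y) -> w s + k < w r -> X r s = Y r s.
Proof. by move=> hXY /hXY; rewrite !mxE => /eqP; rewrite subr_eq0 => /eqP. Qed.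

Lemma in_WEnd_cancel_level k X Y :
    in_WEnd k X -> (forall r s, w r = w s + k -> Y r s = - X r s) ->
    (forall r s, w s + k < w r -> Y r s = 0) ->
  in_WEnd (k - 1) (X + Y).
Proof.
move=> hX Ylvl Ylow r s lt; rewrite mxE.
have [lvl|gt] : w r = w s + k \/ w s + k < w r by lia.
  by rewrite Ylvl // addrN.
by rewrite hX // Ylow // addr0.
Qed.

Lemma in_WEnd_eq0 k X : (forall r s, w s + k < w r) -> in_WEnd k X -> X = 0.
Proof. by move=> low hX; apply/matrixP=> r s; rewrite mxE hX. Qed.

End Weights.

Lemma weights_bounded n (w : 'I_n -> int) : exists k : int, forall r s, w s + k < w r.
Proof.
pose m := (\max_(r < n) `|w r|)%N.
exists (- (m.*2.+1)%:Z) => r s.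
have := @leq_bigmax _ (fun r => `|w r|%N) r; have := @leq_bigmax _ (fun r => `|w r|%N) s.
rewrite -/m; lia.
Qed.

Section TwistedDifferential.
Variables (K : fieldType) (A : DGA K) (n : nat).
Local Notation M := 'M[dga_car A]_n.
Implicit Types x y a : M.

Definition covd x y a : M := dmx a + x *m a - a *m y.

Lemma covd_is_zmod_morphism x y : zmod_morphism (covd x y).
Proof.
move=> a b; rewrite /covd raddfB /= mulmxBr mulmxBl addrACA -opprD.
by rewrite [- (a *m y - _)]opprD addrACA -opprD.
Qed.

HB.instance Definition _ x y :=
  GRing.isZmodMorphism.Build _ _ (covd x y) (covd_is_zmod_morphism x y).

Lemma homog_covd x y a : homog_mx 1 x -> homog_mx 1 y -> homog_mx 0 a -> homog_mx 1 (covd x y a).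
Proof.
move=> x1 y1 a0; apply: homog_mxB; first apply: homog_mxD.
- exact: homog_mx_dmx.
- exact: homog_mx_mul x1 a0.
- exact: homog_mx_mul a0 y1.
Qed.

Lemma dmx_covd x y a :
    homog_mx 1 x -> homog_mx 0 a -> dmx x + x *m x = 0 -> dmx y + y *m y = 0 ->
  dmx (covd x y a) = - (x *m covd x y a + covd x y a *m y).
Proof.
move=> x1 a0 /eqP; rewrite addr_eq0 => /eqP dx /eqP; rewrite addr_eq0 => /eqP dy.
rewrite /covd !raddfB raddfD /= dmx_dmx (dmx_mul_deg1 _ x1) (dmx_mul_deg0 _ a0) dx dy.
rewrite !(mulmxDr, mulmxDl, mulmxBr, mulmxBl, mulNmx, mulmxN, addr0, add0r, sub0r) !mulmxA.
rewrite [in RHS](addrC (dmx a *m y)) -[in RHS](addrA (x *m a *m y)) subrKA.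
by rewrite [in RHS]opprD (addrC (x *m dmx a)) [in RHS]opprD.
Qed.

End TwistedDifferential.

Section CovdWeights.
Variables (K : fieldType) (A : DGA K) (n : nat) (w : 'I_n -> int).
Local Notation M := 'M[dga_car A]_n.
Variables (x y : M).
Hypotheses (xW : in_WEnd w (-1) x) (yW : in_WEnd w (-1) y).

Lemma in_WEnd_covd_dmx k a : in_WEnd w k a -> in_WEnd w (k - 1) (covd x y a - dmx a).
Proof.
move=> aW; rewrite /covd addrAC [dmx a + _]addrC addrK.
by apply: in_WEndB; [rewrite addrC; exact: in_WEnd_mul xW aW | exact: in_WEnd_mul aW yW].
Qed.

Lemma in_WEnd_dmx_flat k a :
  in_WEnd w k a -> in_WEnd w (k - 1) (covd x y a) -> in_WEnd w (k - 1) (dmx a).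
Proof.
by move=> aW Da; rewrite -[dmx a](subKr (covd x y a)); apply: in_WEndB Da (in_WEnd_covd_dmx aW).
Qed.

End CovdWeights.

Section ChangeOfBasis.
Variables (K : fieldType) (A : DGA K) (n : nat) (B : 'M[K]_n).
Hypothesis unitB : B \in unitmx.
Local Notation M := 'M[dga_car A]_n.
Implicit Types X Y : M.

Definition in_basis X : M := embK A (invmx B) *m X *m embK A B.

Lemma in_basis_is_zmod_morphism : zmod_morphism in_basis.
Proof. by move=> X Y; rewrite /in_basis mulmxBr mulmxBl. Qed.

HB.instance Definition _ := GRing.isZmodMorphism.Build _ _ in_basis in_basis_is_zmod_morphism.

Lemma embK_invK : embK A B *m embK A (invmx B) = 1%:M.
Proof. by rewrite !embK_in_alg -map_mxM mulmxV // map_mx1. Qed.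

Lemma embK_Kinv : embK A (invmx B) *m embK A B = 1%:M.
Proof. by rewrite !embK_in_alg -map_mxM mulVmx // map_mx1. Qed.

Lemma in_basisK : cancel in_basis (fun X => embK A B *m X *m embK A (invmx B)).
Proof. by move=> X; rewrite /in_basis !mulmxA embK_invK mul1mx -mulmxA embK_invK mulmx1. Qed.

Lemma in_basisKV : cancel (fun X => embK A B *m X *m embK A (invmx B)) in_basis.
Proof. by move=> X; rewrite /in_basis !mulmxA embK_Kinv mul1mx -mulmxA embK_Kinv mulmx1. Qed.

Lemma in_basis_bij : bijective in_basis.
Proof. exact: Bijective in_basisK in_basisKV. Qed.

Lemma in_basisM X Y : in_basis (X *m Y) = in_basis X *m in_basis Y.
Proof.
by rewrite /in_basis !mulmxA -[_ *m embK A B *m _]mulmxA embK_invK mulmx1.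
Qed.

Lemma in_basis1 : in_basis 1%:M = 1%:M.
Proof. by rewrite /in_basis mulmx1 embK_Kinv. Qed.

Lemma in_basis_dmx X : in_basis (dmx X) = dmx (in_basis X).
Proof. by rewrite /in_basis dmx_embKr dmx_embKl. Qed.

Lemma in_basis_covd x y a : in_basis (covd x y a) = covd (in_basis x) (in_basis y) (in_basis a).
Proof. by rewrite /covd !raddfB raddfD /= in_basis_dmx !in_basisM. Qed.

Lemma in_basis_scale_embK (c : dga_car A) (u : 'M[K]_n) :
  in_basis (c *: embK A u) = c *: embK A (invmx B *m u *m B).
Proof.
have embK_scalel : embK A (invmx B) *m (c *: embK A u) = c *: (embK A (invmx B) *m embK A u).
  apply/matrixP=> r s; rewrite !mxE mulr_sumr; apply: eq_bigr => q _.
  by rewrite !mxE !mulr_algl scalerAr.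
by rewrite /in_basis embK_scalel -scalemxAl !embK_in_alg !map_mxM.
Qed.

End ChangeOfBasis.

Definition tensorw (K : fieldType) (A : DGA K) n (w : 'I_n -> int) p k (X : 'M[dga_car A]_n) :=
  homog_mx p X /\ in_WEnd w k X.

(* [Fnil_obj], [Fnil_hom] and [Fnilgr_hom] read in an adapted basis. *)
Definition Fnilw_obj (K : fieldType) (A : DGA K) n (w : 'I_n -> int) (x : 'M[dga_car A]_n) :=
  tensorw w 1 (-1) x /\ dmx x + x *m x = 0.

Definition Fnilw_hom (K : fieldType) (A : DGA K) n (w : 'I_n -> int) (x y a : 'M[dga_car A]_n) :=
  tensorw w 0 0 a /\ covd x y a = 0.

Definition Fnilw_grhom (K : fieldType) (A : DGA K) n (w : 'I_n -> int) (x y a : 'M[dga_car A]_n) :=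
  tensorw w 0 (-1) (a - 1%:M) /\ covd x y a = 0.

Lemma Fnil_obj_flat (K : fieldType) (A : DGA K) n (W : int -> 'M[K]_n) (x : 'M[dga_car A]_n) :
  (2%:R : K) != 0 -> Fnil_obj W x -> dmx x + x *m x = 0.
Proof.
move=> two_neq0 [_ flat_x]; rewrite -[RHS]flat_x; congr (_ + _).
apply/matrixP=> r s; rewrite !mxE muln1 expr1 mulN1r opprK mulr_algl -mulr2n.
by rewrite -scalerMnr scalerMnl -mulr_natr mulVf // scale1r.
Qed.

Lemma tensor_fin (K : fieldType) (A : DGA K) n p (U : 'M[K]_n -> Prop) (T : finType)
    (c : T -> dga_car A) (u : T -> 'M[K]_n) :
  (forall t, c t \in dga_deg A p) -> (forall t, U (u t)) ->
  tensor A p U (\sum_t c t *: embK A (u t)).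
Proof.
move=> cp Uu; exists #|T|, (c \o enum_val), (u \o enum_val); split=> // [j|j|].
- exact: cp.
- exact: Uu.
exact: big_enum_val.
Qed.

Section AdaptedCoordinates.
Variables (K : fieldType) (n : nat) (W : int -> 'M[K]_n) (B : 'M[K]_n) (w : 'I_n -> int).
Hypothesis unitB : B \in unitmx.
Hypothesis memWE : forall i v, memW W i v <-> (forall p, i < w p -> (invmx B *m v) p 0 = 0).

Lemma WEnd_in_basis k f : WEnd W k f <-> in_WEnd w k (invmx B *m f *m B).
Proof.
split=> [Wf p q ltqp | Wf i v /memWE vW].
  have qW : memW W (w q) (B *m delta_mx q 0).
    apply/memWE => p' ltqp'; rewrite mulKmx // mxE.
    by case: eqP ltqp' => [->|//]; rewrite ltxx.
  by have /memWE/(_ p ltqp) := Wf _ _ qW; rewrite !mulmxA -colE mxE.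
apply/memWE => p ltip.
have -> : invmx B *m (f *m v) = (invmx B *m f *m B) *m (invmx B *m v).
  by rewrite -!mulmxA mulKVmx.
rewrite mxE big1 // => q _; have [ltiq|leqi] := ltP i (w q); first by rewrite vW ?mulr0.
by rewrite Wf ?mul0r //; lia.
Qed.

Variable A : DGA K.

Lemma tensor_in_basis p k X : tensor A p (WEnd W k) X <-> tensorw w p k (in_basis B X).
Proof.
split=> [[m [c [u [cp Wu ->]]]] | [Xp XW]].
  rewrite raddf_sum /=; split=> r s; rewrite summxE.
    by apply: rpred_sum => j _; rewrite in_basis_scale_embK !mxE mulr_algr rpredZ.
  move=> lt; rewrite big1 // => j _.
  by rewrite in_basis_scale_embK 2!mxE (proj1 (WEnd_in_basis _ _) (Wu j)) // scale0r mulr0.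
pose u (t : 'I_n * 'I_n) :=
  if w t.1 <= w t.2 + k then B *m delta_mx t.1 t.2 *m invmx B else 0.
have -> : X = \sum_t in_basis B X t.1 t.2 *: embK A (u t).
  apply: (bij_inj (in_basis_bij A unitB)); rewrite raddf_sum /=.
  rewrite {1}[in_basis B X]matrix_sum_delta pair_bigA; apply: eq_bigr => -[r s] _ /=.
  rewrite in_basis_scale_embK /u; case: ifP => [_ | /negbT]; last first.
    by rewrite -ltNge => /XW->; rewrite !scale0r.
  by rewrite !mulmxA mulVmx // mul1mx mulmxKV // embK_in_alg map_delta_mx.
apply: tensor_fin => [t | [r s]]; first exact: Xp.
rewrite /u /=; case: ifP => [le | _]; last by move=> i v _; rewrite /memW mul0mx trmx0 sub0mx.
apply/WEnd_in_basis; rewrite !mulmxA mulVmx // mul1mx mulmxKV // => r' s' lt.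
by rewrite mxE; case: eqP => [er|//]; case: eqP => [es|//]; move: lt le; rewrite er es; lia.
Qed.

Lemma Fnil_obj_in_basis (two_neq0 : (2%:R : K) != 0) (x : 'M[dga_car A]_n) :
  Fnil_obj W x -> Fnilw_obj w (in_basis B x).
Proof.
move=> objx; split; first exact/tensor_in_basis/(proj1 objx).
have := congr1 (in_basis B) (Fnil_obj_flat two_neq0 objx).
by rewrite raddfD raddf0 /= in_basis_dmx in_basisM.
Qed.

Lemma in_basis_eq0 (X : 'M[dga_car A]_n) : in_basis B X = 0 <-> X = 0.
Proof.
split=> [/eqP|->]; last exact: raddf0.
by rewrite raddf_eq0 => [/eqP|]; last exact: bij_inj (in_basis_bij A unitB).
Qed.

Lemma Fnil_hom_in_basis (x y a : 'M[dga_car A]_n) :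
  Fnil_hom W x y a <-> Fnilw_hom w (in_basis B x) (in_basis B y) (in_basis B a).
Proof.
rewrite /Fnil_hom /Fnilw_hom -in_basis_covd //.
by split=> -[/tensor_in_basis tA /in_basis_eq0 fA].
Qed.

Lemma Fnilgr_hom_in_basis (x y a : 'M[dga_car A]_n) :
  Fnilgr_hom W x y a <-> Fnilw_grhom w (in_basis B x) (in_basis B y) (in_basis B a).
Proof.
have aB1 : in_basis B a - 1%:M = in_basis B (a - 1%:M) by rewrite raddfB /= in_basis1.
rewrite /Fnilgr_hom /Fnilw_grhom -in_basis_covd // aB1.
split=> [[[b [tb ->]] fa] | [/tensor_in_basis ta /in_basis_eq0 fa]]; split=> //.
- by rewrite addrAC subrr add0r; apply/tensor_in_basis.
- exact/in_basis_eq0.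
by exists (a - 1%:M); split=> //; rewrite addrC subrK.
Qed.

End AdaptedCoordinates.

Lemma Fnilw_grhom_hom (K : fieldType) (A : DGA K) n (w : 'I_n -> int) (x y a : 'M[dga_car A]_n) :
  Fnilw_grhom w x y a -> Fnilw_hom w x y a.
Proof.
case=> -[a1_0 a1W] Da; split=> //; rewrite -[a](subrK 1%:M); split.
  by apply: homog_mxD => //; apply: homog_mx1.
by apply: in_WEndD; [apply: (in_WEndW _ a1W) | apply: in_WEnd1].
Qed.

Section DGAMorphism.
Variables (K : fieldType) (A1 A2 : DGA K) (phi : dga_car A1 -> dga_car A2).
Hypothesis phi_morph : dga_morphism phi.

Lemma dga_morphism_zmod : zmod_morphism phi.
Proof. by case: phi_morph => -[phiD phiZ] _ _ _ _ u v; rewrite phiD -scaleN1r phiZ scaleN1r. Qed.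

Lemma dga_morphism_monoid : monoid_morphism phi.
Proof. by case: phi_morph. Qed.

Lemma dga_morphism_scalable : scalable phi.
Proof. by case: phi_morph => -[]. Qed.

HB.instance Definition _ := GRing.isZmodMorphism.Build _ _ phi dga_morphism_zmod.
HB.instance Definition _ := GRing.isMonoidMorphism.Build _ _ phi dga_morphism_monoid.
HB.instance Definition _ := GRing.isScalable.Build _ _ _ _ phi dga_morphism_scalable.

Lemma dga_morphism_deg k u : u \in dga_deg A1 k -> phi u \in dga_deg A2 k.
Proof. by case: phi_morph => _ _ _ phi_deg _; apply: phi_deg. Qed.

Lemma dga_morphism_d u : phi (dga_d A1 u) = dga_d A2 (phi u).
Proof. by case: phi_morph. Qed.

Variable n : nat.
Implicit Types X x y a : 'M[dga_car A1]_n.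

Lemma homog_mx_map p X : homog_mx p X -> homog_mx p (map_mx phi X).
Proof. by move=> hX r s; rewrite mxE dga_morphism_deg. Qed.

Lemma map_dmx X : map_mx phi (dmx X) = dmx (map_mx phi X).
Proof. by apply/matrixP=> r s; rewrite !mxE dga_morphism_d. Qed.

Lemma map_covd x y a :
  map_mx phi (covd x y a) = covd (map_mx phi x) (map_mx phi y) (map_mx phi a).
Proof. by rewrite /covd map_mxB map_mxD !map_mxM map_dmx. Qed.

Lemma map_in_basis B X : map_mx phi (in_basis B X) = in_basis B (map_mx phi X).
Proof.
have map_embK u : map_mx phi (embK A1 u) = embK A2 u.
  by apply/matrixP=> r s; rewrite !mxE rmorph_alg.
by rewrite /in_basis !map_mxM !map_embK.
Qed.

Hypotheses (H0 : cohom_iso phi 0) (H1 : cohom_iso phi 1).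

Lemma cocycle0_eq0 u : cocycle A1 0 u -> phi u = 0 -> u = 0.
Proof. exact: H0.1. Qed.

Lemma cocycle1_lift beta gamma :
    cocycle A1 1 beta -> gamma \in dga_deg A2 0 -> phi beta = dga_d A2 gamma ->
  exists e, [/\ e \in dga_deg A1 0, dga_d A1 e = - beta & phi e = - gamma].
Proof.
move=> beta1 gamma0 phi_beta.
have [v [v0 beta_dv]] : coboundary A1 1 beta by apply: H1.1 => //; exists gamma.
have z0 : cocycle A2 0 (phi v - gamma).
  split; first by rewrite rpredB ?dga_morphism_deg.
  by rewrite raddfB /= -dga_morphism_d -beta_dv phi_beta subrr.
have [u [[u0 du] /eqP]] := H0.2 _ z0; rewrite subr_eq0 => /eqP phi_u.
exists (u - v); split; first by rewrite rpredB.
  by rewrite raddfB /= du beta_dv sub0r.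
by rewrite raddfB /= phi_u addrAC subrr add0r.
Qed.

Lemma in_WEnd_of_image (w : 'I_n -> int) k c :
  homog_mx 0 c -> in_WEnd w k (dmx c) -> in_WEnd w k (map_mx phi c) -> in_WEnd w k c.
Proof.
move=> c0 dc phic r s lt; apply: cocycle0_eq0; last by have := phic r s lt; rewrite mxE.
by split; [exact: c0 | have := dc r s lt; rewrite mxE].
Qed.

Section FlatObjects.
Variables (w : 'I_n -> int) (x y : 'M[dga_car A1]_n).
Hypotheses (x1 : homog_mx 1 x) (xW : in_WEnd w (-1) x) (flat_x : dmx x + x *m x = 0).
Hypotheses (y1 : homog_mx 1 y) (yW : in_WEnd w (-1) y) (flat_y : dmx y + y *m y = 0).

Lemma covd_faithful c : Fnilw_hom w x y c -> map_mx phi c = 0 -> c = 0.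
Proof.
case=> -[c0 cW] Dc phic; have [k0 low] := weights_bounded w.
apply: (@in_WEnd_eq0 _ w _ (- `|k0|%:Z)) => [r s|]; first by have := low r s; lia.
elim: `|k0|%N => [|m IH]; first exact: cW.
have -> : - m.+1%:Z = - m%:Z - 1 by lia.
apply: in_WEnd_of_image => //; last by rewrite phic; apply: in_WEnd0.
by apply: (in_WEnd_dmx_flat xW yW IH); rewrite Dc; apply: in_WEnd0.
Qed.

Lemma covd_unipotent a :
  Fnilw_hom w x y a -> in_WEnd w (-1) (map_mx phi a - 1%:M) -> in_WEnd w (-1) (a - 1%:M).
Proof.
case=> -[a0 aW] Da phia; apply: in_WEnd_of_image; last by rewrite map_mxB map_mx1.
  by apply: homog_mxB => //; apply: homog_mx1.
rewrite raddfB /= dmx1 subr0; have := in_WEnd_dmx_flat xW yW aW; rewrite sub0r.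
by apply; rewrite Da; apply: in_WEnd0.
Qed.

Section Lifting.
Variable c : 'M[dga_car A2]_n.
Hypotheses (c0 : homog_mx 0 c) (cW : in_WEnd w 0 c).
Hypothesis Dc : covd (map_mx phi x) (map_mx phi y) c = 0.

Definition partial_lift k a := [/\ homog_mx 0 a, in_WEnd w 0 a,
  in_WEnd w k (covd x y a) & in_WEnd w k (map_mx phi a - c)].

Lemma partial_lift0 : partial_lift 0 0.
Proof.
split; [by move=> r s; rewrite mxE rpred0 | exact: in_WEnd0 | by rewrite raddf0; apply: in_WEnd0 |].
by rewrite map_mx0 sub0r; apply: in_WEndN.
Qed.

Lemma partial_lift_level k a r s : partial_lift k a -> w r = w s + k ->
  exists e, [/\ e \in dga_deg A1 0, dga_d A1 e = - covd x y a r s &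
                phi e = - (map_mx phi a - c) r s].
Proof.
case=> a0 aW Da phia lvl; have lt : w s + (k - 1) < w r by lia.
have phi0 : phi 0 = 0 by rewrite raddf0.
apply: cocycle1_lift; last 1 first.
- have := in_WEnd_subE (in_WEnd_covd_dmx (in_WEnd_map phi0 xW) (in_WEnd_map phi0 yW) phia) lt.
  by rewrite raddfB /= Dc subr0 -map_covd [map_mx _ _ _ _]mxE [dmx _ _ _]mxE.
- split; first exact: homog_covd x1 y1 a0 r s.
  have : in_WEnd w (k - 1) (dmx (covd x y a)).
    rewrite dmx_covd //; apply/in_WEndN/in_WEndD; last exact: in_WEnd_mul Da yW.
    by rewrite addrC; apply: in_WEnd_mul xW Da.
  by move=> /(_ r s lt); rewrite mxE.
exact: homog_mxB (homog_mx_map a0) c0 r s.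
Qed.

Lemma partial_lift_step k a : k <= 0 -> partial_lift k a -> exists a', partial_lift (k - 1) a'.
Proof.
move=> k_le0 aP; have [a0 aW Da phia] := aP.
have level r s : exists e, w r = w s + k ->
    [/\ e \in dga_deg A1 0, dga_d A1 e = - covd x y a r s & phi e = - (map_mx phi a - c) r s].
  have [/(partial_lift_level aP)[e ?]|nlvl] := eqVneq (w r) (w s + k); first by exists e.
  by exists 0 => lvl; rewrite lvl eqxx in nlvl.
have [e eP] := fin_all_exists (fun r => fin_all_exists (level r)).
pose D := \matrix_(r, s) if w r == w s + k then e r s else 0.
have DE r s : D r s = if w r == w s + k then e r s else 0 by rewrite mxE.
have DW : in_WEnd w k D by move=> r s lt; rewrite DE ifF //; apply/eqP; lia.
exists (a + D); split.
- apply: homog_mxD a0 _ => r s; rewrite DE; case: eqP => [/eP[]//|_]; exact: rpred0.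
- exact: in_WEndD aW (in_WEndW k_le0 DW).
- rewrite raddfD /= -[covd x y D](subrK (dmx D)) addrCA.
  apply: in_WEndD (in_WEnd_covd_dmx xW yW DW) (in_WEnd_cancel_level Da _ _) => r s.
    by move=> lvl; rewrite mxE DE lvl eqxx; case: (eP r s lvl).
  by move=> /DW lt; rewrite mxE lt raddf0.
rewrite map_mxD addrAC; apply: in_WEnd_cancel_level phia _ _ => r s.
  by move=> lvl; rewrite mxE DE lvl eqxx; case: (eP r s lvl).
by move=> /DW lt; rewrite mxE lt raddf0.
Qed.

End Lifting.

Lemma covd_full c : Fnilw_hom w (map_mx phi x) (map_mx phi y) c ->
  exists a, Fnilw_hom w x y a /\ map_mx phi a = c.
Proof.
case=> -[c0 cW] Dc; have [k0 low] := weights_bounded w.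
have low' r s : w s + - `|k0|%:Z < w r by have := low r s; lia.
have [a [a0 aW Da phia]] : exists a, partial_lift c (- `|k0|%:Z) a.
  elim: `|k0|%N => [|m [a aP]]; first by exists 0; apply: partial_lift0.
  have -> : - m.+1%:Z = - m%:Z - 1 by lia.
  by apply: partial_lift_step aP => //; lia.
exists a; split; first by split; [split | exact: in_WEnd_eq0 low' Da].
by apply/eqP; rewrite -subr_eq0; apply/eqP; exact: in_WEnd_eq0 low' phia.
Qed.

End FlatObjects.

Lemma Fnilw_fully_faithful (w : 'I_n -> int) :
  fully_faithful (Fnilw_obj w) (Fnilw_hom w) (Fnilw_hom w) (map_mx phi) (map_mx phi).
Proof.
move=> x y [[x1 xW] flat_x] [[y1 yW] flat_y]; split; last exact: covd_full.
move=> a b [[a0 aW] Da] [[b0 bW] Db] phi_ab; apply/eqP; rewrite -subr_eq0; apply/eqP.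
apply: (covd_faithful xW yW); last by rewrite map_mxB phi_ab subrr.
by split; [split; [exact: homog_mxB | exact: in_WEndB] | rewrite raddfB /= Da Db subrr].
Qed.

Lemma Fnilw_gr_fully_faithful (w : 'I_n -> int) :
  fully_faithful (Fnilw_obj w) (Fnilw_grhom w) (Fnilw_grhom w) (map_mx phi) (map_mx phi).
Proof.
move=> x y objx objy; have [faithful full] := Fnilw_fully_faithful objx objy.
split=> [a b /Fnilw_grhom_hom ha /Fnilw_grhom_hom hb | c hc]; first exact: faithful.
have [a [ha phi_a]] := full c (Fnilw_grhom_hom hc); exists a; split=> //.
have [[[x1 xW] _] [[_ yW] _]] := (objx, objy); split; last exact: ha.2.
split; first by apply: homog_mxB; [exact: ha.1.1 | exact: homog_mx1].
by apply: (covd_unipotent xW yW ha); rewrite phi_a; exact: hc.1.2.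
Qed.

End DGAMorphism.

Lemma fully_faithful_transport (T1 T2 : Type) (obj obj' : T1 -> Prop)
    (hom1 hom1' : T1 -> T1 -> T1 -> Prop) (hom2 hom2' : T2 -> T2 -> T2 -> Prop)
    (F : T1 -> T2) (g1 : T1 -> T1) (g2 : T2 -> T2) :
    bijective g1 -> injective g2 -> (forall x, F (g1 x) = g2 (F x)) ->
    (forall x, obj x -> obj' (g1 x)) ->
    (forall x y a, hom1 x y a <-> hom1' (g1 x) (g1 y) (g1 a)) ->
    (forall x y a, hom2 x y a <-> hom2' (g2 x) (g2 y) (g2 a)) ->
  fully_faithful obj' hom1' hom2' F F -> fully_faithful obj hom1 hom2 F F.
Proof.
move=> [h1 g1K h1K] g2_inj Fg obj_g hom1_g hom2_g ff' x y /obj_g ox /obj_g oy.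
have [faithful' full'] := ff' _ _ ox oy; split.
  move=> a b /hom1_g ha /hom1_g hb Fab; apply: (can_inj g1K); apply: faithful' ha hb _.
  by rewrite !Fg Fab.
move=> c /hom2_g; rewrite -!Fg => /full'[a' [ha' Fa']].
exists (h1 a'); split; first by apply/hom1_g; rewrite h1K.
by apply: g2_inj; rewrite -Fg h1K.
Qed.

Lemma Kfield_two_neq0 b : (2%:R : Kfield b) != 0.
Proof. by case: b; rewrite /= pnatr_eq0. Qed.

Theorem proposition10p2 (b : bool) (n : nat) (W : int -> 'M[Kfield b]_n)
    (A1 A2 : DGA (Kfield b)) (phi : dga_car A1 -> dga_car A2) :
  filtration W ->
  cohom_connected A1 -> cohom_connected A2 ->
  dga_morphism phi -> cohom_iso phi 0 -> cohom_iso phi 1 ->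
  fully_faithful (Fnil_obj W) (Fnil_hom W) (Fnil_hom W)
    (map_mx phi) (map_mx phi) /\
  fully_faithful (Fnil_obj W) (Fnilgr_hom W) (Fnilgr_hom W)
    (map_mx phi) (map_mx phi).
Proof.
move=> /filtration_adapted_basis[B [w [unitB memWE]]] _ _ phi_morph H0 H1.
have transport := fully_faithful_transport (in_basis_bij A1 unitB)
  (bij_inj (in_basis_bij A2 unitB)) (map_in_basis phi_morph B)
  (Fnil_obj_in_basis unitB memWE (Kfield_two_neq0 b)).
split; apply: transport.
- exact: Fnil_hom_in_basis.
- exact: Fnil_hom_in_basis.
- exact: Fnilw_fully_faithful.
- exact: Fnilgr_hom_in_basis.
- exact: Fnilgr_hom_in_basis.
- exact: Fnilw_gr_fully_faithful.
Qed.
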